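(* Let $a,b\in\mathbb{C}$ be such that the six numbers $(t_1,\dots,t_6)=(1,-1,a,-a,b,-b)$ are pairwise distinct, and let ${\mathcal A}^0=\{H_1^0,\dots,H_6^0\}$ be the central arrangement in $\mathbb{C}^3$ with $H_i^0=\{x\in\mathbb{C}^3:\alpha_i\cdot x=0\}$, $\alpha_i=(1,t_i,t_i^2)$. Then ${\mathcal A}^0$ is a central generic arrangement which is non-very generic.
   Context: A central arrangement ${\mathcal A}^0=\{H_1^0,\dots,H_n^0\}$ of linear hyperplanes in $\mathbb{C}^k$ ($k<n$) is called central generic if any $m\le k$ of its hyperplanes intersect in codimension $m$. For $t=(x_1,\dots,x_n)\in\mathbb{C}^n$ the translate ${\mathcal A}^t$ consists of $H_i^{x_i}=H_i^0+\alpha_i x_i$, $\alpha_i$ normal to $H_i^0$. For $L\subset[n]$, $|L|=k+1$, $D_L\subset\mathbb{C}^n$ is the hyperplane of translations $t$ with $\bigcap_{p\in L}H_p^{x_p}\ne\emptyset$; the discriminantal arrangement ${\mathcal B}(n,k,{\mathcal A}^0)$ is the arrangement of all $D_L$. There is a Zariski open dense set $\mathcal Z$ of central generic arrangements of $n$ hyperplanes in $\mathbb{C}^k$ on which the intersection lattice of ${\mathcal B}(n,k,{\mathcal A})$ is constant; arrangements in $\mathcal Z$ are very generic, the others non-very generic. *)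

From HB Require Import structures.
From mathcomp Require Import all_boot all_order all_algebra.
From mathcomp Require Import mpoly.
From mathcomp Require Import reals complex.
Set Implicit Arguments. Unset Strict Implicit. Unset Printing Implicit Defensive.
Import Order.TTheory GRing.Theory Num.Theory.
Local Open Scope ring_scope.

Section Arr.
Variable F : fieldType.

(* An arrangement of n hyperplanes in F^k is given by the matrix M whose
   i-th row alpha_i = row i M is the normal vector of H_i^0 = {x | alpha_i . x = 0}. *)
Definition dotv k (u v : 'rV[F]_k) : F := (u *m v^T) 0 0.

Definition hyp0 n k (M : 'M[F]_(n, k)) (i : 'I_n) : 'M[F]_k :=
  kermx (row i M)^T.

Definition central_generic n k (M : 'M[F]_(n, k)) : Prop :=
  (forall i, row i M != 0) /\
  forall S : {set 'I_n}, (#|S| <= k)%N ->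
    (k - \rank (\bigcap_(i in S) hyp0 M i)%MS)%N = #|S|.

Definition in_transl n k (M : 'M[F]_(n, k)) (p : 'I_n) (x : F) (v : 'rV[F]_k) : Prop :=
  exists w : 'rV[F]_k, dotv w (row p M) = 0 /\ v = w + x *: row p M.

Definition D_L n k (M : 'M[F]_(n, k)) (L : {set 'I_n}) (t : 'rV[F]_n) : Prop :=
  exists v : 'rV[F]_k, forall p, p \in L -> in_transl M p (t 0 p) v.

(* intersection of the hyperplanes D_L of B(n,k,A) indexed by a family S
   (only the L with |L| = k+1 are hyperplanes of B(n,k,A)) *)
Definition B_inter n k (M : 'M[F]_(n, k)) (S : {set {set 'I_n}}) (t : 'rV[F]_n) : Prop :=
  forall L, L \in S -> #|L| = k.+1 -> D_L M L t.

(* the (labelled) intersection lattice of B(n,k,A): inclusion relation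
   between the intersections of the subfamilies *)
Definition B_lattice_le n k (M : 'M[F]_(n, k)) (S T : {set {set 'I_n}}) : Prop :=
  forall t, B_inter M S t -> B_inter M T t.

Definition same_B_lattice n k (M M' : 'M[F]_(n, k)) : Prop :=
  forall S T, B_lattice_le M S T <-> B_lattice_le M' S T.

Definition peval n k (P : {mpoly F[n * k]}) (M : 'M[F]_(n, k)) : F :=
  meval (fun j => mxvec M 0 j) P.

(* very generic: A lies in a (nonempty, hence dense) Zariski open set of
   central generic arrangements on which the intersection lattice of
   B(n,k,.) is constant; principal opens {P <> 0} form a basis. *)
Definition very_generic n k (M : 'M[F]_(n, k)) : Prop :=
  exists P : {mpoly F[n * k]},
    [/\ P != 0, peval P M != 0,
        forall M', peval P M' != 0 -> central_generic M' &
        forall M', peval P M' != 0 -> same_B_lattice M M'].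

Definition non_very_generic n k (M : 'M[F]_(n, k)) : Prop :=
  central_generic M /\ ~ very_generic M.

End Arr.

Definition moment_arr (F : fieldType) (t : 'I_6 -> F) : 'M[F]_(6, 3) :=
  \matrix_(i < 6, j < 3) (t i) ^+ j.

Definition tseq (F : fieldType) (a b : F) : seq F := [:: 1; -1; a; -a; b; -b].

From HB Require Import structures.
From mathcomp Require Import all_boot all_order all_algebra.
From mathcomp Require Import mpoly.
From mathcomp Require Import reals complex.
From mathcomp Require Import ring.
Set Implicit Arguments. Unset Strict Implicit. Unset Printing Implicit Defensive.
Import Order.TTheory GRing.Theory Num.Theory.
Local Open Scope ring_scope.

(* A translated hyperplane is H_p^x = {v | v.alpha_p = x (alpha_p.alpha_p)}, so with
   alpha_p = (1, t_p, t_p^2) a point of the intersection of the H_p^(x_p), p in L, is a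
   quadratic f(T) = v_0 + v_1 T + v_2 T^2 taking prescribed values y_p at the nodes t_p.
   When the four nodes of L form two antipodal pairs +-c, +-d, such an f exists iff the
   odd parts agree, (y_c - y_-c) d = (y_d - y_-d) c.  Hence for the nodes 1,-1,a,-a,b,-b
   the intersection of D_{1,-1,a,-a} and D_{1,-1,b,-b} lies in D_{a,-a,b,-b}.  Tilting the
   two normals of the pair +-b antisymmetrically by s destroys this inclusion for all but
   finitely many s, while a polynomial that does not vanish at A^0 vanishes at only
   finitely many points of that line; so no Zariski open set on which the lattice is
   constant contains A^0.  Central genericity holds because the normals form a
   Vandermonde matrix. *)

Section Translates.
Variable F : fieldType.

Lemma dotvDl k (u w z : 'rV[F]_k) : dotv (u + w) z = dotv u z + dotv w z.
Proof. by rewrite /dotv mulmxDl mxE. Qed.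

Lemma dotvZl k c (u z : 'rV[F]_k) : dotv (c *: u) z = c * dotv u z.
Proof. by rewrite /dotv -scalemxAl mxE. Qed.

Lemma dotvDr k (u w z : 'rV[F]_k) : dotv u (w + z) = dotv u w + dotv u z.
Proof. by rewrite /dotv linearD mulmxDr mxE. Qed.

Lemma dotvZr k c (u z : 'rV[F]_k) : dotv u (c *: z) = c * dotv u z.
Proof. by rewrite /dotv linearZ -scalemxAr mxE. Qed.

Definition transl_level n k (M : 'M[F]_(n, k)) (t : 'rV[F]_n) (p : 'I_n) : F :=
  t 0 p * dotv (row p M) (row p M).

Lemma in_translE n k (M : 'M[F]_(n, k)) p x v :
  in_transl M p x v <-> dotv v (row p M) = x * dotv (row p M) (row p M).
Proof.
split=> [[w [w0 ->]]|h]; first by rewrite dotvDl dotvZl w0 add0r.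
exists (v - x *: row p M); split; last by rewrite subrK.
by rewrite -scaleNr dotvDl dotvZl h mulNr addrN.
Qed.

Lemma D_LE n k (M : 'M[F]_(n, k)) L t :
  D_L M L t <-> exists v, forall p, p \in L -> dotv v (row p M) = transl_level M t p.
Proof. by split=> -[v hv]; exists v => p /hv /in_translE. Qed.

Lemma transl_level_prescribed n k (M : 'M[F]_(n, k)) (y : 'I_n -> F) :
  (forall p, y p != 0 -> dotv (row p M) (row p M) != 0) ->
  exists t, forall p, transl_level M t p = y p.
Proof.
move=> ny; exists (\row_p (y p / dotv (row p M) (row p M))) => p.
rewrite /transl_level mxE; have [->|/ny] := eqVneq (y p) 0; first by rewrite !mul0r.
by move=> nz; rewrite divfK.
Qed.

End Translates.

Section AntipodalPairs.
Variable F : fieldType.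

Definition row3 (x y z : F) : 'rV[F]_3 := \row_m [:: x; y; z]`_m.

Lemma dotv_row3 v x y z : dotv v (row3 x y z) = v 0 0 * x + v 0 1 * y + v 0 2 * z.
Proof.
rewrite /dotv !mxE !big_ord_recl big_ord0 addr0 addrA !mxE /=.
by congr (_ * _ + _ * _ + _ * _); congr (v 0 _); apply: val_inj.
Qed.

Lemma dotv_row3_row3 x y z x' y' z' :
  dotv (row3 x y z) (row3 x' y' z') = x * x' + y * y' + z * z'.
Proof. by rewrite dotv_row3 !mxE. Qed.

Lemma row3D (x y z x' y' z' : F) : row3 x y z + row3 x' y' z' = row3 (x + x') (y + y') (z + z').
Proof. by apply/rowP => j; rewrite !mxE; case: j => [[|[|[|]]] ?]. Qed.

Lemma row3Z (c x y z : F) : c *: row3 x y z = row3 (c * x) (c * y) (c * z).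
Proof. by apply/rowP => j; rewrite !mxE; case: j => [[|[|[|]]] ?]. Qed.

Lemma antipodal_pairs_solvable c d e g r yi yj yk yl :
  (2 : F) != 0 -> c != 0 -> e != g ->
  (exists v, [/\ dotv v (row3 1 c e) = yi, dotv v (row3 1 (- c) e) = yj,
                 dotv v (row3 1 d (g + r)) = yk & dotv v (row3 1 (- d) (g - r)) = yl])
  <-> (yi - yj) * d * (g - e) + (yk + yl - yi - yj) * r * c = (yk - yl) * c * (g - e).
Proof.
move=> n2 c0 eg; split=> [[v [<- <- <- <-]]|h]; first by rewrite !dotv_row3; ring.
have ge0 : g - e != 0 by rewrite subr_eq0 eq_sym.
pose v1 := (yi - yj) / (2 * c); pose v2 := (yk + yl - yi - yj) / (2 * (g - e)).
have hv1 : c * v1 = (yi - yj) / 2 by rewrite /v1; field; rewrite c0 n2.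
have hv2 : (g - e) * v2 = (yk + yl - yi - yj) / 2.
  by rewrite /v2; field; rewrite ge0 n2.
have hkl : d * v1 + r * v2 = (yk - yl) / 2.
  have -> : d * v1 + r * v2 =
      ((yi - yj) * d * (g - e) + (yk + yl - yi - yj) * r * c) / (2 * c * (g - e)).
    by rewrite /v1 /v2; field; rewrite ge0 c0 n2.
  by rewrite h; field; rewrite ge0 c0 n2.
exists (row3 ((yi + yj) / 2 - e * v2) v1 v2); split; rewrite dotv_row3 !mxE /=.
- by transitivity ((yi + yj) / 2 + c * v1); [ring | rewrite hv1; field].
- by transitivity ((yi + yj) / 2 - c * v1); [ring | rewrite hv1; field].
- transitivity ((yi + yj) / 2 + (g - e) * v2 + (d * v1 + r * v2)); first ring.
  by rewrite hv2 hkl; field.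
- transitivity ((yi + yj) / 2 + (g - e) * v2 - (d * v1 + r * v2)); first ring.
  by rewrite hv2 hkl; field.
Qed.

Lemma D_L_antipodal n (M : 'M[F]_(n, 3)) t i j k l c d e g r :
  (2 : F) != 0 -> c != 0 -> e != g ->
  row i M = row3 1 c e -> row j M = row3 1 (- c) e ->
  row k M = row3 1 d (g + r) -> row l M = row3 1 (- d) (g - r) ->
  let y := transl_level M t in
  D_L M [set i; j; k; l] t <->
  (y i - y j) * d * (g - e) + (y k + y l - y i - y j) * r * c = (y k - y l) * c * (g - e).
Proof.
move=> n2 c0 eg ri rj rk rl y; rewrite D_LE -antipodal_pairs_solvable //.
rewrite -ri -rj -rk -rl; split=> -[v hv]; exists v.
  by split; apply: hv; rewrite !inE eqxx ?orbT.
by case: hv => hi hj hk hl p; rewrite !inE -!orbA => /or4P[] /eqP ->.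
Qed.

Lemma D_L_symmetric_pairs n (M : 'M[F]_(n, 3)) t i j k l c d e g :
  (2 : F) != 0 -> c != 0 -> e != g ->
  row i M = row3 1 c e -> row j M = row3 1 (- c) e ->
  row k M = row3 1 d g -> row l M = row3 1 (- d) g ->
  let y := transl_level M t in
  D_L M [set i; j; k; l] t <-> (y i - y j) * d = (y k - y l) * c.
Proof.
move=> n2 c0 eg ri rj rk rl y.
rewrite (@D_L_antipodal _ _ _ _ _ _ _ c d e g 0) ?addr0 ?subr0 // mulr0 mul0r addr0.
have ge0 : g - e != 0 by rewrite subr_eq0 eq_sym.
by split=> [/(mulIf ge0)|->] //; rewrite mulrAC.
Qed.

End AntipodalPairs.

Section CentralGeneric.
Variable F : fieldType.

Lemma bigcap_hyp0E n k (M : 'M[F]_(n, k)) (S : {set 'I_n}) :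
  (\bigcap_(i in S) hyp0 M i == kermx (rowsub (fun j : 'I_#|S| => enum_val j) M)^T)%MS.
Proof.
set R := rowsub _ M.
have mulRtE (w : 'rV[F]_k) j : (w *m R^T) 0 j = (w *m (row (enum_val j) M)^T) 0 0.
  by rewrite !mxE; apply: eq_bigr => l _; rewrite !mxE.
apply/andP; split; apply/row_subP => r; set w := row r _.
  have /sub_bigcapmxP hw : (w <= \bigcap_(i in S) hyp0 M i)%MS by apply: row_sub.
  rewrite sub_kermx; apply/eqP/rowP => j; rewrite mulRtE.
  by move: (hw _ (enum_valP j)); rewrite sub_kermx => /eqP ->; rewrite !mxE.
have /sub_kermxP wR0 : (w <= kermx R^T)%MS by apply: row_sub.
apply/sub_bigcapmxP => i iS; rewrite sub_kermx; apply/eqP/matrixP => x y.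
by rewrite !ord1 -(enum_rankK_in iS iS) -mulRtE wR0 !mxE.
Qed.

Lemma central_generic_row_free n k (M : 'M[F]_(n, k)) :
  (forall i, row i M != 0) ->
  (forall S : {set 'I_n}, (#|S| <= k)%N ->
     row_free (rowsub (fun j : 'I_#|S| => enum_val j) M)) ->
  central_generic M.
Proof.
move=> nzM freeM; split=> // S leSk.
rewrite (eqmx_rank (bigcap_hyp0E M S)) mxrank_ker mxrank_tr.
by move/eqP: (freeM S leSk) => ->; rewrite subKn.
Qed.

Lemma row_free_powers m k (c : 'I_m -> F) : (m <= k)%N -> injective c ->
  row_free (\matrix_(j < m, l < k) c j ^+ l).
Proof.
move=> lemk injc; set A := \matrix_(j, l) _.
have AV : colsub (widen_ord lemk) A = (Vandermonde m (\row_j c j))^T.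
  by apply/matrixP => j l; rewrite !mxE.
have : row_free (colsub (widen_ord lemk) A).
  rewrite row_free_unit unitmxE AV det_tr det_Vandermonde unitfE.
  apply/prodf_neq0 => i _; apply/prodf_neq0 => j ltij; rewrite !mxE subr_eq0.
  by apply: contraTneq ltij => /injc ->; rewrite ltnn.
have -> : colsub (widen_ord lemk) A = A *m colsub (widen_ord lemk) 1%:M.
  by rewrite mulmx_colsub mulmx1.
move=> /eqP rkAP.
by rewrite /row_free eqn_leq rank_leq_row -{1}rkAP mxrankM_maxl.
Qed.

End CentralGeneric.

Section Lines.
Variable F : fieldType.
Variables (n k : nat) (M N : 'M[F]_(n, k)).

Definition peval_line (P : {mpoly F[n * k]}) : {poly F} :=
  mmap polyC (fun j => (mxvec M 0 j)%:P + (mxvec N 0 j)%:P * 'X) P.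

Lemma horner_peval_line P s : (peval_line P).[s] = peval P (M + s *: N).
Proof.
rewrite /peval mevalE /peval_line /mmap horner_sum; apply: eq_bigr => m _.
rewrite hornerM hornerC /mmap1 horner_prod; congr (_ * _); apply: eq_bigr => i _.
by rewrite horner_exp hornerD hornerC hornerCM hornerX linearD linearZ /= !mxE mulrC.
Qed.

Definition row_sqnorm_line (p : 'I_n) : {poly F} :=
  (dotv (row p M) (row p M))%:P
  + (dotv (row p M) (row p N) + dotv (row p N) (row p M))%:P * 'X
  + (dotv (row p N) (row p N))%:P * 'X^2.

Lemma horner_row_sqnorm_line p s :
  (row_sqnorm_line p).[s] = dotv (row p (M + s *: N)) (row p (M + s *: N)).
Proof.
have -> : row p (M + s *: N) = row p M + s *: row p N by rewrite linearD linearZ.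
rewrite /row_sqnorm_line !(hornerD, hornerCM, hornerC, hornerX, hornerXn).
by rewrite !(dotvDl, dotvDr, dotvZl, dotvZr); ring.
Qed.

Lemma row_sqnorm_line_neq0 p :
  dotv (row p N) (row p N) != 0 -> row_sqnorm_line p != 0.
Proof.
apply: contraNneq => /(congr1 (fun q : {poly F} => q`_2)).
by rewrite /row_sqnorm_line !coefE /= !mulr0 !add0r mulr1 => ->.
Qed.

End Lines.

Lemma exists_nonroot (R : numDomainType) (q : {poly R}) : q != 0 -> exists x, q.[x] != 0.
Proof.
move=> q0; pose xs := [seq i%:R : R | i <- iota 0 (size q)].
have uxs : uniq xs by rewrite map_inj_uniq ?iota_uniq //; apply: mulrIn; rewrite oner_eq0.
have : ~~ all (root q) xs.
  by apply/negP => /(max_poly_roots q0)/(_ uxs); rewrite size_map size_iota ltnn.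
by case/allPn => x _ qx; exists x.
Qed.

Lemma not_very_generic_line (F : numFieldType) n k (M N : 'M[F]_(n, k)) S T (q : {poly F}) :
  q != 0 -> B_lattice_le M S T ->
  (forall s, q.[s] != 0 -> ~ B_lattice_le (M + s *: N) S T) ->
  ~ very_generic M.
Proof.
move=> q0 leST nleST [P [_ PM0 _ sameP]].
have PL0 : peval_line M N P != 0.
  by apply: contraNneq PM0 => PL0; rewrite -[M]addr0 -(scale0r N) -horner_peval_line PL0 horner0.
have [s] := exists_nonroot (mulf_neq0 PL0 q0).
rewrite hornerM mulf_eq0 negb_or horner_peval_line => /andP[/sameP samePs qs].
by apply: (nleST s qs); apply/(samePs S T).
Qed.

Local Notation o k := (@Ordinal 6 k isT).

Definition L0123 : {set 'I_6} := [set o 0; o 1; o 2; o 3].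
Definition L0145 : {set 'I_6} := [set o 0; o 1; o 4; o 5].
Definition L2345 : {set 'I_6} := [set o 2; o 3; o 4; o 5].

Lemma card_L0123 : #|L0123| = 4%N.
Proof. by rewrite /L0123 -!setUA !cardsU1 !inE cards1. Qed.
Lemma card_L0145 : #|L0145| = 4%N.
Proof. by rewrite /L0145 -!setUA !cardsU1 !inE cards1. Qed.
Lemma card_L2345 : #|L2345| = 4%N.
Proof. by rewrite /L2345 -!setUA !cardsU1 !inE cards1. Qed.

Section MomentArrangement.
Variable F : fieldType.

Lemma row_moment_arr (t : 'I_6 -> F) p : row p (moment_arr t) = row3 1 (t p) (t p ^+ 2).
Proof. by apply/rowP => j; rewrite !mxE; case: j => [[|[|[|]]] ?] //=; rewrite expr1. Qed.

Lemma moment_arr_central_generic (t : 'I_6 -> F) : injective t -> central_generic (moment_arr t).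
Proof.
move=> injt; apply: central_generic_row_free => [i|S leS3].
  by rewrite row_moment_arr; apply/eqP => /rowP/(_ 0)/eqP; rewrite !mxE oner_eq0.
have -> : rowsub (fun j : 'I_#|S| => enum_val j) (moment_arr t) =
          \matrix_(j, l) t (enum_val j) ^+ l by apply/matrixP => j l; rewrite !mxE.
by apply: row_free_powers leS3 _ => j1 j2 /injt /enum_val_inj.
Qed.

End MomentArrangement.

Section SymmetricNodes.
Variables (F : fieldType) (a b : F).
Hypothesis tseq_uniq : uniq (tseq a b).
Local Notation u := (fun i : 'I_6 => nth 0 (tseq a b) i).
Local Notation M := (moment_arr u).

Lemma tseq_uniq_neq :
  [/\ (2 : F) != 0, a != 0, (1 : F) != a ^+ 2, (1 : F) != b ^+ 2 & a ^+ 2 != b ^+ 2].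
Proof.
move: tseq_uniq; rewrite /= !inE !negb_or.
move=> /andP[/and5P[n1 n1a _ n1b _] /andP[/and4P[n1a' _ n1b' _] /andP[/and3P[naa nab nab'] _]]].
split.
- by apply: contraNneq n1 => h; rewrite -addr_eq0 -[1 + 1]/(2 : F) h.
- by apply: contraNneq naa => ->; rewrite oppr0.
- by rewrite eq_sym sqrf_eq1 negb_or eq_sym n1a eq_sym n1a'.
- by rewrite eq_sym sqrf_eq1 negb_or eq_sym n1b eq_sym n1b'.
- by rewrite eqf_sqr negb_or nab nab'.
Qed.

Lemma tseq_nth_injective : injective u.
Proof. by move=> i j /eqP; rewrite nth_uniq // => /eqP /val_inj. Qed.

Lemma moment_lattice_le : B_lattice_le M [set L0123; L0145] [set L2345].
Proof.
have [n2 a0 n1a n1b nab] := tseq_uniq_neq.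
have r0 : row (o 0) M = row3 1 1 1 by rewrite row_moment_arr expr1n.
have r1 : row (o 1) M = row3 1 (- 1) 1 by rewrite row_moment_arr /= sqrrN expr1n.
have r2 : row (o 2) M = row3 1 a (a ^+ 2) by rewrite row_moment_arr.
have r3 : row (o 3) M = row3 1 (- a) (a ^+ 2) by rewrite row_moment_arr /= sqrrN.
have r4 : row (o 4) M = row3 1 b (b ^+ 2) by rewrite row_moment_arr.
have r5 : row (o 5) M = row3 1 (- b) (b ^+ 2) by rewrite row_moment_arr /= sqrrN.
move=> t hS L; rewrite inE => /eqP -> _.
have := hS _ (set21 _ _) card_L0123.
move/(D_L_symmetric_pairs t n2 (oner_neq0 F) n1a r0 r1 r2 r3) => /=; rewrite mulr1 => h1.
have := hS _ (set22 _ _) card_L0145.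
move/(D_L_symmetric_pairs t n2 (oner_neq0 F) n1b r0 r1 r4 r5) => /=; rewrite mulr1 => h2.
apply/(D_L_symmetric_pairs t n2 a0 nab r2 r3 r4 r5) => /=.
by rewrite -h1 -h2; ring.
Qed.

(* The normals (1, +-b, b^2) become (1, +-b, b^2 +- s); a tilt of the same sign on both
   would keep the pair symmetric, and with it the inclusion of moment_lattice_le. *)
Definition tilt : 'M[F]_(6, 3) :=
  \matrix_i (if i == o 4 then row3 0 0 1 else if i == o 5 then row3 0 0 (- 1) else 0).

Lemma tilted_lattice_not_le s : s != 0 ->
  dotv (row (o 4) (M + s *: tilt)) (row (o 4) (M + s *: tilt)) != 0 ->
  dotv (row (o 5) (M + s *: tilt)) (row (o 5) (M + s *: tilt)) != 0 ->
  ~ B_lattice_le (M + s *: tilt) [set L0123; L0145] [set L2345].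
Proof.
have [n2 a0 n1a n1b nab] := tseq_uniq_neq.
set Ms := M + s *: tilt => s0 n4 n5 leMs.
have rowMs p : row p Ms = row p M + s *: row p tilt by rewrite linearD linearZ.
have r0 : row (o 0) Ms = row3 1 1 1.
  by rewrite rowMs rowK /= scaler0 addr0 row_moment_arr expr1n.
have r1 : row (o 1) Ms = row3 1 (- 1) 1.
  by rewrite rowMs rowK /= scaler0 addr0 row_moment_arr /= sqrrN expr1n.
have r2 : row (o 2) Ms = row3 1 a (a ^+ 2).
  by rewrite rowMs rowK /= scaler0 addr0 row_moment_arr.
have r3 : row (o 3) Ms = row3 1 (- a) (a ^+ 2).
  by rewrite rowMs rowK /= scaler0 addr0 row_moment_arr /= sqrrN.
have r4 : row (o 4) Ms = row3 1 b (b ^+ 2 + s).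
  by rewrite rowMs rowK /= row_moment_arr row3Z row3D !mulr0 !addr0 mulr1.
have r5 : row (o 5) Ms = row3 1 (- b) (b ^+ 2 - s).
  by rewrite rowMs rowK /= row_moment_arr row3Z row3D !mulr0 !addr0 mulrN1 /= sqrrN.
pose y p : F := if p == o 4 then b ^+ 2 + s - 1 else if p == o 5 then b ^+ 2 - s - 1 else 0.
have [t ht] : exists t, forall p, transl_level Ms t p = y p.
  apply: transl_level_prescribed => p; rewrite /y.
  by case: ifP => [/eqP -> //|_]; case: ifP => [/eqP -> //|_]; rewrite eqxx.
have : B_inter Ms [set L0123; L0145] t.
  move=> L; rewrite !inE => /orP[] /eqP -> _.
    apply/(D_L_symmetric_pairs t n2 (oner_neq0 F) n1a r0 r1 r2 r3).
    by rewrite /= !ht /y /=; ring.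
  apply/(D_L_antipodal t n2 (oner_neq0 F) n1b r0 r1 r4 r5).
  by rewrite /= !ht /y /=; ring.
move/leMs/(_ _ (set11 _) card_L2345).
move/(D_L_antipodal t n2 a0 nab r2 r3 r4 r5); rewrite /= !ht /y /=.
move/eqP; rewrite -subr_eq0 => /eqP h.
have : 2 * s * a * (a ^+ 2 - 1) = 0 by rewrite -h; ring.
by apply/eqP; rewrite !mulf_eq0 negb_or !negb_or n2 s0 a0 subr_eq0 eq_sym n1a.
Qed.

End SymmetricNodes.

Lemma moment_not_very_generic (F : numFieldType) (a b : F) :
  uniq (tseq a b) -> ~ very_generic (moment_arr (fun i : 'I_6 => nth 0 (tseq a b) i)).
Proof.
move=> tseq_uniq; set M := moment_arr _.
(* q avoids s = 0 and the parameters where a tilted normal is isotropic, at which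
   translating that hyperplane has no effect. *)
pose q := 'X * row_sqnorm_line M (tilt F) (o 4) * row_sqnorm_line M (tilt F) (o 5).
apply: (@not_very_generic_line _ _ _ M (tilt F) _ _ q).
- rewrite !mulf_neq0 ?polyX_eq0 // row_sqnorm_line_neq0 // rowK /= dotv_row3_row3;
    by rewrite ?mulr0 ?add0r ?mulrNN mulr1 oner_eq0.
- exact: moment_lattice_le.
- move=> s; rewrite !hornerM hornerX !horner_row_sqnorm_line !mulf_eq0 !negb_or.
  by move=> /andP[/andP[s0 n4] n5]; apply: tilted_lattice_not_le.
Qed.

Theorem mainTheorem4 (R : realType) (a b : R[i]) :
  uniq (tseq a b) ->
  central_generic (moment_arr (fun i : 'I_6 => nth 0 (tseq a b) i)) /\
  non_very_generic (moment_arr (fun i : 'I_6 => nth 0 (tseq a b) i)).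
Proof.
move=> tseq_uniq.
have cgM := moment_arr_central_generic (tseq_nth_injective tseq_uniq).
by split; last split; last exact: moment_not_very_generic.
Qed.
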